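(* Let $\mathcal{U}$ be a selective nonprincipal ultrafilter on $\mathbb{N}$, let $X$ be an infinite-dimensional reflexive Banach space, and let $(T_n)_{n\ge1}$ be a bounded sequence in $B(X)$. Then the ultraproduct $(T_1,T_2,\ldots)_{\mathcal{U}}$ is not equal to $I\oplus0$ with respect to the decomposition $X^{\mathcal{U}}=X\oplus\widehat{X}$ (i.e. it is not the operator that is the identity on $X$ and zero on $\widehat{X}$).
   Context: $X^{\mathcal{U}}$ is the ultrapower of $X$, $(x_n)_{n,\mathcal{U}}$ the class of a bounded sequence; $X$ is identified with constant classes and $\widehat{X}=\{(x_n)_{n,\mathcal{U}}:w\text{-}\lim_{n,\mathcal{U}}x_n=0\}$, so $X^{\mathcal{U}}=X\oplus\widehat{X}$. The ultraproduct is $(T_1,T_2,\ldots)_{\mathcal{U}}(x_n)_{n,\mathcal{U}}=(T_nx_n)_{n,\mathcal{U}}$. An ultrafilter $\mathcal{U}$ on $\mathbb{N}$ is selective if (1) for every sequence $A_1,A_2,\dots$ in $\mathcal{U}$ there is $A\in\mathcal{U}$ with $A\setminus A_k$ finite for each $k$; and (2) for every partition of $\mathbb{N}$ into finite sets $A_1,A_2,\dots$ there is $A\in\mathcal{U}$ with $A\cap A_k$ a singleton for each $k$. *)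

From Stdlib Require Import Reals.
Open Scope R_scope.

Record RBanach := {
  car :> Type;
  zero : car;
  add : car -> car -> car;
  opp : car -> car;
  scal : R -> car -> car;
  norm : car -> R;
  add_assoc : forall x y z, add x (add y z) = add (add x y) z;
  add_comm : forall x y, add x y = add y x;
  add_zero : forall x, add zero x = x;
  add_opp : forall x, add x (opp x) = zero;
  scal_add_l : forall a b x, scal (a + b) x = add (scal a x) (scal b x);
  scal_add_r : forall a x y, scal a (add x y) = add (scal a x) (scal a y);
  scal_assoc : forall a b x, scal a (scal b x) = scal (a * b) x;
  scal_one : forall x, scal 1 x = x;
  norm_eq0 : forall x, norm x = 0 -> x = zero;
  norm_scal : forall a x, norm (scal a x) = Rabs a * norm x;
  norm_triangle : forall x y, norm (add x y) <= norm x + norm y;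
  complete : forall u : nat -> car,
    (forall eps, eps > 0 -> exists N, forall m n, (N <= m)%nat -> (N <= n)%nat ->
        norm (add (u m) (opp (u n))) < eps) ->
    exists l, forall eps, eps > 0 -> exists N, forall n, (N <= n)%nat ->
        norm (add (u n) (opp l)) < eps
}.

Arguments zero {r}. Arguments add {r}. Arguments opp {r}.
Arguments scal {r}. Arguments norm {r}.

Fixpoint lin_comb {X : RBanach} (v : nat -> X) (c : nat -> R) (n : nat) : X :=
  match n with
  | O => zero
  | S m => add (lin_comb v c m) (scal (c m) (v m))
  end.

Definition infinite_dimensional (X : RBanach) : Prop :=
  forall n : nat, exists v : nat -> X, forall c : nat -> R,
    lin_comb v c n = zero -> forall i, (i < n)%nat -> c i = 0.

Definition bounded_linear_functional {X : RBanach} (f : X -> R) : Prop :=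
  (forall x y, f (add x y) = f x + f y) /\
  (forall a x, f (scal a x) = a * f x) /\
  (exists C, forall x, Rabs (f x) <= C * norm x).

(** Reflexivity: every bounded linear functional Phi on X^* (with the dual carrying the
    operator norm: ||f|| <= M iff |f x| <= M ||x|| for all x) is evaluation at some x. *)
Definition reflexive (X : RBanach) : Prop :=
  forall Phi : (X -> R) -> R,
    (forall f g, bounded_linear_functional f -> bounded_linear_functional g ->
       Phi (fun x => f x + g x) = Phi f + Phi g) ->
    (forall a f, bounded_linear_functional f -> Phi (fun x => a * f x) = a * Phi f) ->
    (exists C, forall f M, bounded_linear_functional f -> 0 <= M ->
       (forall x, Rabs (f x) <= M * norm x) -> Rabs (Phi f) <= C * M) ->
    exists x0 : X, forall f, bounded_linear_functional f -> Phi f = f x0.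

Definition bounded_operator_sequence {X : RBanach} (T : nat -> X -> X) : Prop :=
  (forall n x y, T n (add x y) = add (T n x) (T n y)) /\
  (forall n a x, T n (scal a x) = scal a (T n x)) /\
  (exists C, forall n x, norm (T n x) <= C * norm x).

Definition ultrafilter (U : (nat -> Prop) -> Prop) : Prop :=
  U (fun _ => True) /\
  ~ U (fun _ => False) /\
  (forall A B : nat -> Prop, U A -> (forall n, A n -> B n) -> U B) /\
  (forall A B : nat -> Prop, U A -> U B -> U (fun n => A n /\ B n)) /\
  (forall A : nat -> Prop, U A \/ U (fun n => ~ A n)).

Definition nonprincipal (U : (nat -> Prop) -> Prop) : Prop :=
  forall m : nat, ~ U (fun n => n = m).

Definition finite_set (A : nat -> Prop) : Prop :=
  exists N, forall n, A n -> (n < N)%nat.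

Definition selective (U : (nat -> Prop) -> Prop) : Prop :=
  ultrafilter U /\
  (forall A : nat -> nat -> Prop, (forall k, U (A k)) ->
     exists B, U B /\ forall k, finite_set (fun n => B n /\ ~ A k n)) /\
  (forall A : nat -> nat -> Prop,
     (forall k, finite_set (A k)) ->
     (forall k, exists n, A k n) ->
     (forall k l n, A k n -> A l n -> k = l) ->
     (forall n, exists k, A k n) ->
     exists B, U B /\ forall k, exists n, (B n /\ A k n) /\
                 forall m, B m -> A k m -> m = n).

Definition ulim (U : (nat -> Prop) -> Prop) (a : nat -> R) (L : R) : Prop :=
  forall eps, eps > 0 -> U (fun n => Rabs (a n - L) < eps).

Definition weak_ulim {X : RBanach} (U : (nat -> Prop) -> Prop) (x : nat -> X) (x0 : X) : Prop :=
  forall f, bounded_linear_functional f -> ulim U (fun n => f (x n)) (f x0).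

Definition bounded_seq {X : RBanach} (x : nat -> X) : Prop :=
  exists C, forall n, norm (x n) <= C.

(** Elements of X^U are classes (x_n)_{n,U} of bounded sequences, with
    (x_n)_U = (y_n)_U iff lim_U ||x_n - y_n|| = 0.  X^U = X (+) \hat X where
    (x_n)_U = x + ((x_n - x)_n)_U with x = w-lim_U x_n.  Hence the ultraproduct
    (T_1,T_2,...)_U equals I (+) 0 iff for every bounded (x_n) with weak U-limit x,
    (T_n x_n)_U = x (the constant class). *)
Definition ultraproduct_is_I_plus_0 {X : RBanach} (U : (nat -> Prop) -> Prop)
    (T : nat -> X -> X) : Prop :=
  forall (x : nat -> X) (x0 : X), bounded_seq x -> weak_ulim U x x0 ->
    ulim U (fun n => norm (add (T n (x n)) (opp x0))) 0.

(* Riesz's lemma gives unit vectors e_k at mutual distance >= 1/2.  If the ultraproduct were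
   I (+) 0, then T_n e_k -> e_k along U for every k, and the P-point property of U (condition (1)
   of selectivity) yields indices f n -> oo along U with T_n e_(f n) close to e_(f n).  By
   reflexivity (e_(f n)) has a weak U-limit w, and I (+) 0 forces T_n e_(f n) -> w in norm; hence
   e_(f n) -> w in norm along U, which the separation of the e_k forbids. *)

From Stdlib Require Import Reals Lra Lia Classical ClassicalEpsilon FunctionalExtensionality.
Open Scope R_scope.

Arguments add_assoc {r}. Arguments add_comm {r}. Arguments add_zero {r}. Arguments add_opp {r}.
Arguments scal_add_l {r}. Arguments scal_add_r {r}. Arguments scal_assoc {r}. Arguments scal_one {r}.
Arguments norm_eq0 {r}. Arguments norm_scal {r}. Arguments norm_triangle {r}.

Local Notation dist x y := (norm (add x (opp y))).

Section NormedSpace.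
Context {X : RBanach}.
Implicit Types x y z : X.

Lemma add_zero_r x : add x zero = x.
Proof. rewrite add_comm; apply add_zero. Qed.

Lemma add_opp_l x : add (opp x) x = zero.
Proof. rewrite add_comm; apply add_opp. Qed.

Lemma add_cancel_l z x y : add z x = add z y -> x = y.
Proof.
  intro H. rewrite <- (add_zero x), <- (add_zero y), <- (add_opp_l z), <- !add_assoc, H.
  reflexivity.
Qed.

Lemma add_ACA x y z (t : X) : add (add x y) (add z t) = add (add x z) (add y t).
Proof. rewrite <- !add_assoc. f_equal. rewrite !add_assoc. f_equal. apply add_comm. Qed.

Lemma scal_zero_l x : scal 0 x = zero.
Proof.
  apply (add_cancel_l (scal 0 x)). rewrite add_zero_r, <- scal_add_l, Rplus_0_r. reflexivity.
Qed.

Lemma scal_zero_r a : scal a (zero : X) = zero.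
Proof.
  apply (add_cancel_l (scal a zero)). rewrite add_zero_r, <- scal_add_r, add_zero. reflexivity.
Qed.

Lemma opp_eq_scal x : opp x = scal (-1) x.
Proof.
  apply (add_cancel_l x). rewrite add_opp. rewrite <- (scal_one x) at 1.
  rewrite <- scal_add_l. replace (1 + -1) with 0 by ring. symmetry; apply scal_zero_l.
Qed.

Lemma opp_scal a x : opp (scal a x) = scal (- a) x.
Proof. rewrite opp_eq_scal, scal_assoc. f_equal; ring. Qed.

Lemma scal_opp a x : scal a (opp x) = scal (- a) x.
Proof. rewrite opp_eq_scal, scal_assoc. f_equal; ring. Qed.

Lemma opp_add x y : opp (add x y) = add (opp x) (opp y).
Proof. rewrite !opp_eq_scal, scal_add_r. reflexivity. Qed.

Lemma opp_opp x : opp (opp x) = x.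
Proof.
  rewrite !opp_eq_scal, scal_assoc. replace (-1 * -1) with 1 by ring. apply scal_one.
Qed.

Lemma opp_zero : opp (zero : X) = zero.
Proof. rewrite opp_eq_scal; apply scal_zero_r. Qed.

Lemma sub_add_cancel x y : add (add x (opp y)) y = x.
Proof. rewrite <- add_assoc, add_opp_l, add_zero_r. reflexivity. Qed.

Lemma scal_sub a x y : scal a (add x (opp y)) = add (scal a x) (opp (scal a y)).
Proof. rewrite scal_add_r, scal_opp, opp_scal. reflexivity. Qed.

Lemma norm_zero : norm (zero : X) = 0.
Proof. rewrite <- (scal_zero_l (zero : X)), norm_scal, Rabs_R0; ring. Qed.

Lemma norm_opp x : norm (opp x) = norm x.
Proof. rewrite opp_eq_scal, norm_scal, Rabs_left; lra. Qed.

Lemma norm_ge0 x : 0 <= norm x.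
Proof.
  pose proof (norm_triangle x (opp x)) as H. rewrite add_opp, norm_zero, norm_opp in H; lra.
Qed.

Lemma norm_gt0 x : x <> zero -> 0 < norm x.
Proof.
  intro H. destruct (norm_ge0 x) as [h|h]; auto. symmetry in h. now apply norm_eq0 in h.
Qed.

Lemma dist_sym x y : dist x y = dist y x.
Proof. rewrite <- norm_opp, opp_add, opp_opp, add_comm. reflexivity. Qed.

Lemma dist_triangle x y z : dist x z <= dist x y + dist y z.
Proof.
  replace (add x (opp z)) with (add (add x (opp y)) (add y (opp z))); [apply norm_triangle|].
  rewrite <- add_assoc, (add_assoc (opp y)), add_opp_l, add_zero. reflexivity.
Qed.

End NormedSpace.

Section Ultrafilter.
Variable U : (nat -> Prop) -> Prop.
Hypothesis HU : ultrafilter U.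

Lemma filter_mono (A B : nat -> Prop) : U A -> (forall n, A n -> B n) -> U B.
Proof. destruct HU as (_ & _ & H & _); eauto. Qed.

Lemma filter_and (A B : nat -> Prop) : U A -> U B -> U (fun n => A n /\ B n).
Proof. destruct HU as (_ & _ & _ & H & _); eauto. Qed.

Lemma filter_all (A : nat -> Prop) : (forall n, A n) -> U A.
Proof. intro h. destruct HU as (HT & _). apply (filter_mono _ _ HT); auto. Qed.

Lemma filter_ex (A : nat -> Prop) : U A -> exists n, A n.
Proof.
  intro HA. apply NNPP; intro H. destruct HU as (_ & H0 & _).
  apply H0, (filter_mono _ _ HA). intros n h; apply H; eauto.
Qed.

Lemma filter_ge (K : nat) : nonprincipal U -> U (fun n => (K <= n)%nat).
Proof.
  intro HN. induction K as [|K IHK].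
  - apply filter_all; intros; lia.
  - assert (HK : U (fun n => n <> K)).
    { destruct HU as (_ & _ & _ & _ & h). destruct (h (fun n => n = K)); auto.
      exfalso; eapply HN; eauto. }
    apply (filter_mono _ _ (filter_and _ _ IHK HK)). intros n [h1 h2]; lia.
Qed.

Lemma ulim_lt (a : nat -> R) eps : ulim U a 0 -> eps > 0 -> U (fun n => a n < eps).
Proof.
  intros h heps. apply (filter_mono _ _ (h eps heps)). intros n hn.
  rewrite Rminus_0_r in hn. pose proof (Rle_abs (a n)). lra.
Qed.

Lemma ulim_exists (a : nat -> R) C : (forall n, Rabs (a n) <= C) -> exists L, ulim U a L.
Proof.
  intros Hb. set (E := fun t => U (fun n => t <= a n)).
  assert (HE1 : bound E).
  { exists C. intros t Ht. apply Rnot_lt_le; intro Hlt. destruct (filter_ex _ Ht) as [n hn].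
    pose proof (Hb n). pose proof (Rle_abs (a n)). lra. }
  assert (HE2 : E (- C)).
  { apply filter_all. intro n. pose proof (Hb n). pose proof (Rle_abs (- a n)).
    rewrite Rabs_Ropp in *. lra. }
  destruct (completeness E HE1 (ex_intro _ _ HE2)) as [L [HL1 HL2]].
  exists L. intros eps Heps.
  assert (h1 : U (fun n => L - eps < a n)).
  { apply NNPP; intro H. assert (Hub : is_upper_bound E (L - eps)).
    { intros t Ht. apply Rnot_lt_le; intro Hlt. apply H.
      apply (filter_mono _ _ Ht). intros; lra. }
    specialize (HL2 _ Hub). lra. }
  assert (h2 : U (fun n => a n < L + eps)).
  { assert (hE : ~ E (L + eps / 2)) by (intro h; specialize (HL1 _ h); lra).
    destruct HU as (_ & _ & _ & _ & h).
    destruct (h (fun n => L + eps / 2 <= a n)) as [hge|hlt]; [contradiction|].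
    apply (filter_mono _ _ hlt). intros n hn; lra. }
  apply (filter_mono _ _ (filter_and _ _ h1 h2)). intros n [g1 g2]. apply Rabs_def1; lra.
Qed.

Lemma ulim_unique a L1 L2 : ulim U a L1 -> ulim U a L2 -> L1 = L2.
Proof.
  intros h1 h2. apply NNPP; intro hne.
  set (e := Rabs (L1 - L2) / 2).
  assert (he : e > 0) by (unfold e; assert (0 < Rabs (L1 - L2)) by (apply Rabs_pos_lt; lra); lra).
  destruct (filter_ex _ (filter_and _ _ (h1 e he) (h2 e he))) as [n [g1 g2]].
  pose proof (Rabs_triang (L1 - a n) (a n - L2)).
  replace (L1 - a n + (a n - L2)) with (L1 - L2) in * by ring.
  rewrite <- Rabs_Ropp in g1. replace (- (a n - L1)) with (L1 - a n) in g1 by ring.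
  unfold e in *. lra.
Qed.

Lemma ulimD a b La Lb : ulim U a La -> ulim U b Lb -> ulim U (fun n => a n + b n) (La + Lb).
Proof.
  intros h1 h2 eps he.
  apply (filter_mono _ _ (filter_and _ _ (h1 (eps / 2) ltac:(lra)) (h2 (eps / 2) ltac:(lra)))).
  intros n [g1 g2]. pose proof (Rabs_triang (a n - La) (b n - Lb)).
  replace (a n + b n - (La + Lb)) with (a n - La + (b n - Lb)) by ring. lra.
Qed.

Lemma ulimZ a La k : ulim U a La -> ulim U (fun n => k * a n) (k * La).
Proof.
  intros h eps he. assert (hk : 0 < Rabs k + 1) by (pose proof (Rabs_pos k); lra).
  apply (filter_mono _ _ (h (eps / (Rabs k + 1)) ltac:(apply Rdiv_lt_0_compat; lra))).
  intros n g. replace (k * a n - k * La) with (k * (a n - La)) by ring. rewrite Rabs_mult.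
  apply Rle_lt_trans with ((Rabs k + 1) * Rabs (a n - La)).
  { pose proof (Rabs_pos (a n - La)). nra. }
  apply (Rmult_lt_compat_l (Rabs k + 1)) in g; auto.
  replace ((Rabs k + 1) * (eps / (Rabs k + 1))) with eps in g by (field; lra). exact g.
Qed.

Lemma ulim_abs_le a L B : ulim U a L -> (forall n, Rabs (a n) <= B) -> Rabs L <= B.
Proof.
  intros h hb. apply Rnot_lt_le; intro hl.
  destruct (filter_ex _ (h (Rabs L - B) ltac:(lra))) as [n hn].
  pose proof (hb n). pose proof (Rabs_triang_inv L (a n)). rewrite <- Rabs_Ropp in hn.
  replace (- (a n - L)) with (L - a n) in hn by ring. lra.
Qed.

End Ultrafilter.

Section LinearCombination.
Context {X : RBanach}.
Implicit Types (v w ys : nat -> X) (c d : nat -> R).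

Definition in_span ys n (x : X) := exists a, x = lin_comb ys a n.

Definition dependent v n := exists c, lin_comb v c n = zero /\ exists i, (i < n)%nat /\ c i <> 0.

Lemma lin_combS v c n : lin_comb v c (S n) = add (lin_comb v c n) (scal (c n) (v n)).
Proof. reflexivity. Qed.

Lemma eq_lin_comb v w c d n : (forall i, (i < n)%nat -> v i = w i) ->
  (forall i, (i < n)%nat -> c i = d i) -> lin_comb v c n = lin_comb w d n.
Proof. induction n; intros h1 h2; simpl; auto. rewrite IHn, h1, h2; auto. Qed.

Lemma lin_comb0 v n : lin_comb v (fun _ => 0) n = zero.
Proof. induction n; simpl; auto. rewrite IHn, scal_zero_l, add_zero; auto. Qed.

Lemma lin_comb_zero_vec c n : lin_comb (fun _ => (zero : X)) c n = zero.
Proof. induction n; simpl; auto. rewrite IHn, scal_zero_r, add_zero; auto. Qed.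

Lemma lin_combD v c d n :
  lin_comb v (fun i => c i + d i) n = add (lin_comb v c n) (lin_comb v d n).
Proof. induction n; simpl; [rewrite add_zero; auto|]. rewrite IHn, scal_add_l, add_ACA; auto. Qed.

Lemma lin_combZ v k c n : lin_comb v (fun i => k * c i) n = scal k (lin_comb v c n).
Proof. induction n; simpl; [rewrite scal_zero_r; auto|]. rewrite IHn, scal_add_r, scal_assoc; auto. Qed.

Lemma lin_comb_addv v w c n :
  lin_comb (fun i => add (v i) (w i)) c n = add (lin_comb v c n) (lin_comb w c n).
Proof. induction n; simpl; [rewrite add_zero; auto|]. rewrite IHn, scal_add_r, add_ACA; auto. Qed.

Lemma lin_comb_scal_const (s : nat -> R) (y : X) c n :
  exists K, lin_comb (fun i => scal (s i) y) c n = scal K y.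
Proof.
  induction n as [|n [K HK]]; simpl.
  - exists 0. rewrite scal_zero_l; auto.
  - exists (K + c n * s n). rewrite HK, scal_assoc, scal_add_l; auto.
Qed.

Lemma lin_comb_delta v j k n : (j < n)%nat ->
  lin_comb v (fun i => if Nat.eqb i j then k else 0) n = scal k (v j).
Proof.
  induction n; intro h; [lia|]. simpl. destruct (Nat.eqb_spec n j) as [->|E].
  - rewrite (eq_lin_comb _ v _ (fun _ => 0)), lin_comb0, add_zero; auto.
    intros i hi. destruct (Nat.eqb_spec i j); [lia|auto].
  - rewrite IHn, scal_zero_l, add_zero_r by lia. auto.
Qed.

Lemma lin_comb_delta_vec (y : X) j c n : (j < n)%nat ->
  lin_comb (fun i => if Nat.eqb i j then y else zero) c n = scal (c j) y.
Proof.
  induction n; intro h; [lia|]. simpl. destruct (Nat.eqb_spec n j) as [->|E].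
  - rewrite (eq_lin_comb _ (fun _ => zero) _ c), lin_comb_zero_vec, add_zero; auto.
    intros i hi. destruct (Nat.eqb_spec i j); [lia|auto].
  - rewrite IHn, scal_zero_r, add_zero_r by lia. auto.
Qed.

Lemma lin_comb_update v j x c n : (j < n)%nat ->
  lin_comb (fun i => if Nat.eqb i j then x else v i) c n
  = add (lin_comb v c n) (scal (c j) (add x (opp (v j)))).
Proof.
  intro h.
  rewrite (eq_lin_comb _ (fun i => add (v i) (if Nat.eqb i j then add x (opp (v j)) else zero)) _ c).
  - rewrite lin_comb_addv, lin_comb_delta_vec; auto.
  - intros i hi. destruct (Nat.eqb_spec i j) as [->|].
    + rewrite add_comm, sub_add_cancel; auto.
    + rewrite add_zero_r; auto.
  - auto.
Qed.

Lemma lin_comb_extend ys b n g :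
  lin_comb ys (fun i => if Nat.eqb i n then g else b i) (S n) = add (lin_comb ys b n) (scal g (ys n)).
Proof.
  simpl. rewrite Nat.eqb_refl. f_equal. apply eq_lin_comb; auto.
  intros i hi. destruct (Nat.eqb_spec i n); [lia|auto].
Qed.

Lemma dependentS v n : dependent v n -> dependent v (S n).
Proof.
  intros [c [hc [i [hi hci]]]]. exists (fun m => if Nat.eqb m n then 0 else c m). split.
  - rewrite lin_comb_extend, scal_zero_l, add_zero_r; auto.
  - exists i. split; [lia|]. destruct (Nat.eqb_spec i n); [lia|auto].
Qed.

(* Gaussian elimination step: subtracting multiples of the pivot [v j] makes [v' j = 0], and
   moving [v' (S n)] into slot [j] leaves [S n] vectors to which induction applies. *)
Lemma dependent_pivot v (s : nat -> R) j n : (j <= S n)%nat -> s j = -1 ->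
  let v' := fun i => add (v i) (scal (s i) (v j)) in
  dependent (fun i => if Nat.eqb i j then v' (S n) else v' i) (S n) -> dependent v (S (S n)).
Proof.
  intros hj hs v' [c [hc0 [i0 [hi0 hci0]]]].
  assert (Hv'j : v' j = zero) by (unfold v'; rewrite hs, <- opp_eq_scal, add_opp; auto).
  set (d := fun i => if Nat.eqb i (S n) then c j else c i).
  assert (Hd : lin_comb v' d (S (S n)) = zero).
  { rewrite lin_combS.
    replace (lin_comb v' d (S n)) with (lin_comb v' c (S n))
      by (apply eq_lin_comb; auto; intros i hi; unfold d; destruct (Nat.eqb_spec i (S n)); [lia|auto]).
    unfold d. rewrite Nat.eqb_refl, <- hc0. destruct (Nat.eq_dec j (S n)) as [<-|e].
    - rewrite Hv'j, scal_zero_r, add_zero_r. apply eq_lin_comb; auto.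
      intros i hi. destruct (Nat.eqb_spec i j); [lia|auto].
    - rewrite lin_comb_update, Hv'j, opp_zero, add_zero_r by lia. reflexivity. }
  unfold v' in Hd. rewrite lin_comb_addv in Hd.
  destruct (lin_comb_scal_const s (v j) d (S (S n))) as [K HK]. rewrite HK in Hd.
  exists (fun i => d i + (if Nat.eqb i j then K else 0)). split.
  - rewrite lin_combD, lin_comb_delta by lia. exact Hd.
  - assert (exists i1, (i1 <= S n)%nat /\ i1 <> j /\ d i1 <> 0) as [i1 [g1 [g2 g3]]].
    { destruct (Nat.eq_dec i0 j) as [->|e].
      - exists (S n). unfold d. rewrite Nat.eqb_refl. split; [lia|split; [lia|auto]].
      - exists i0. unfold d. split; [lia|split; [auto|]].
        destruct (Nat.eqb_spec i0 (S n)); [lia|auto]. }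
    exists i1. split; [lia|]. destruct (Nat.eqb_spec i1 j); [contradiction|lra].
Qed.

Lemma dependent_in_span ys n : forall v,
  (forall i, (i <= n)%nat -> in_span ys n (v i)) -> dependent v (S n).
Proof.
  induction n as [|n IHn]; intros v Hv.
  - destruct (Hv 0%nat (le_n _)) as [a ha]. exists (fun _ => 1). split.
    + simpl in *. rewrite ha, scal_zero_r, add_zero; auto.
    + exists 0%nat; split; [lia|lra].
  - destruct (choice (fun i a => (i <= S n)%nat -> v i = lin_comb ys a (S n))) as [A HA].
    { intro i. destruct (Compare_dec.le_gt_dec i (S n)) as [hi|hi].
      - destruct (Hv i hi) as [a ha]; eauto.
      - exists (fun _ => 0); intro; lia. }
    destruct (classic (exists j, (j <= S n)%nat /\ A j n <> 0)) as [[j [hj hp]] | hno].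
    + apply (dependent_pivot v (fun i => - (A i n / A j n)) j n hj); [field; auto|].
      apply IHn. intros i hi.
      assert (Hspan : forall m, (m <= S n)%nat ->
        in_span ys n (add (v m) (scal (- (A m n / A j n)) (v j)))).
      { intros m hm. exists (fun l => A m l + - (A m n / A j n) * A j l).
        rewrite (HA m), (HA j), !lin_combS, lin_combD, lin_combZ, scal_add_r, scal_assoc by lia.
        replace (- (A m n / A j n) * A j n) with (- A m n) by (field; auto).
        rewrite add_ACA, <- scal_add_l, Rplus_opp_r, scal_zero_l, add_zero_r. auto. }
      destruct (Nat.eqb i j); apply Hspan; lia.
    + apply dependentS, IHn. intros i hi. exists (A i).
      rewrite (HA i), lin_combS by lia.
      replace (A i n) with 0 by (apply NNPP; intro h; apply hno; exists i; split; [lia|auto]).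
      rewrite scal_zero_l, add_zero_r. auto.
Qed.

Lemma exists_not_in_span ys n : infinite_dimensional X -> exists x, ~ in_span ys n x.
Proof.
  intros HI. destruct (HI (S n)) as [v hv]. apply NNPP; intro h.
  destruct (dependent_in_span ys n v) as [c [h1 [i [hi hc]]]].
  - intros i hi. apply NNPP; intro h'. apply h; eauto.
  - apply hc, (hv c h1); lia.
Qed.

End LinearCombination.

Lemma inv_INR_S_pos k : 0 < / (INR k + 1).
Proof. apply Rinv_0_lt_compat. pose proof (pos_INR k); lra. Qed.

Lemma inv_INR_S_le1 k : / (INR k + 1) <= 1.
Proof. rewrite <- Rinv_1. apply Rinv_le_contravar; [lra|]. pose proof (pos_INR k); lra. Qed.

Lemma inv_INR_S_lt eps : eps > 0 -> exists K, forall k, (K <= k)%nat -> / (INR k + 1) < eps.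
Proof.
  intro he. destruct (INR_unbounded (/ eps)) as [K hK]. exists K. intros k hk.
  apply le_INR in hk. assert (0 < / eps) by (apply Rinv_0_lt_compat; auto).
  rewrite <- (Rinv_inv eps). apply Rinv_lt_contravar; [apply Rmult_lt_0_compat|]; lra.
Qed.

Section Riesz.
Context {X : RBanach}.
Implicit Types (ys : nat -> X) (c : nat -> R).

Lemma lin_comb_last_coef_le ys n c dy :
  (forall b, dy <= dist (ys n) (lin_comb ys b n)) ->
  Rabs (c n) * dy <= norm (lin_comb ys c (S n)).
Proof.
  intro hb. destruct (Req_dec (c n) 0) as [h|h].
  - rewrite h, Rabs_R0, Rmult_0_l. apply norm_ge0.
  - replace (lin_comb ys c (S n))
      with (scal (c n) (add (ys n) (opp (lin_comb ys (fun i => -1 * (c i / c n)) n)))).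
    + rewrite norm_scal. apply Rmult_le_compat_l; [apply Rabs_pos|auto].
    + rewrite scal_sub, <- lin_combZ, lin_combS.
      replace (fun i => c n * (-1 * (c i / c n))) with (fun i => -1 * c i)
        by (apply functional_extensionality; intro i; field; auto).
      rewrite lin_combZ, <- opp_eq_scal, opp_opp. apply add_comm.
Qed.

Lemma dist_sub_last ys n c (x : X) g :
  dist (add x (opp (scal g (ys n)))) (lin_comb ys c n)
  <= dist x (lin_comb ys c (S n)) + Rabs (c n - g) * norm (ys n).
Proof.
  replace (add (add x (opp (scal g (ys n)))) (opp (lin_comb ys c n)))
    with (add (add x (opp (lin_comb ys c (S n)))) (scal (c n - g) (ys n))).
  - rewrite <- norm_scal. apply norm_triangle.
  - rewrite lin_combS, opp_add, <- !add_assoc. f_equal.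
    replace (scal (c n - g) (ys n)) with (add (scal (c n) (ys n)) (opp (scal g (ys n))))
      by (rewrite opp_scal, <- scal_add_l; f_equal; ring).
    rewrite (add_assoc (opp (scal (c n) (ys n)))), add_opp_l, add_zero. apply add_comm.
Qed.

Variable U : (nat -> Prop) -> Prop.
Hypothesis HU : ultrafilter U.
Hypothesis HN : nonprincipal U.

(* Induction on the number of spanning vectors: the coefficients of near-best approximations
   are bounded, so their U-limit [g] exists, and the distance from [x - g ys_n] to the smaller
   span is then both positive and small. *)
Lemma dist_span_pos n : forall ys (x : X), ~ in_span ys n x ->
  exists d, d > 0 /\ forall c, d <= dist x (lin_comb ys c n).
Proof.
  induction n as [|n IHn]; intros ys x Hx.
  - exists (norm x). split.
    + apply norm_gt0. intro h; apply Hx. exists (fun _ => 0). simpl; auto.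
    + intro c. simpl. rewrite opp_zero, add_zero_r. lra.
  - destruct (classic (in_span ys n (ys n))) as [[a ha] | hy].
    + assert (hx : ~ in_span ys n x).
      { intros [b hb]. apply Hx. exists (fun i => if Nat.eqb i n then 0 else b i).
        rewrite lin_comb_extend, scal_zero_l, add_zero_r; auto. }
      destruct (IHn ys x hx) as [d [hd1 hd2]]. exists d; split; auto.
      intro c. rewrite lin_combS, ha, <- lin_combZ, <- lin_combD. apply hd2.
    + destruct (IHn ys (ys n) hy) as [dy [hdy1 hdy2]].
      apply NNPP; intro hno.
      destruct (choice (fun k c => dist x (lin_comb ys c (S n)) < / (INR k + 1))) as [C HC].
      { intro k. apply NNPP; intro h. apply hno. exists (/ (INR k + 1)).
        split; [apply inv_INR_S_pos|]. intro c. apply Rnot_lt_le; intro h'. apply h; eauto. }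
      assert (Hbd : forall k, Rabs (C k n) <= (norm x + 1) / dy).
      { intro k. pose proof (lin_comb_last_coef_le ys n (C k) dy hdy2).
        pose proof (dist_triangle (lin_comb ys (C k) (S n)) x zero) as hnorm.
        rewrite opp_zero, !add_zero_r, (dist_sym _ x) in hnorm.
        pose proof (HC k). pose proof (inv_INR_S_le1 k).
        apply (Rmult_le_reg_r dy); auto. unfold Rdiv. rewrite Rmult_assoc, Rinv_l by lra. lra. }
      destruct (ulim_exists U HU (fun k => C k n) _ Hbd) as [g Hg].
      assert (hx' : ~ in_span ys n (add x (opp (scal g (ys n))))).
      { intros [b hb]. apply Hx. exists (fun i => if Nat.eqb i n then g else b i).
        rewrite lin_comb_extend, <- hb, sub_add_cancel; auto. }
      destruct (IHn ys _ hx') as [d2 [hd21 hd22]].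
      destruct (inv_INR_S_lt (d2 / 2) ltac:(lra)) as [K HK].
      assert (hpos : 0 < d2 / (2 * (norm (ys n) + 1))).
      { pose proof (norm_ge0 (ys n)). apply Rdiv_lt_0_compat; lra. }
      destruct (filter_ex U HU _ (filter_and U HU _ _ (Hg _ hpos) (filter_ge U HU K HN)))
        as [k [hk1 hk2]].
      pose proof (dist_sub_last ys n (C k) x g). specialize (hd22 (C k)).
      specialize (HK k hk2). specialize (HC k). pose proof (norm_ge0 (ys n)).
      assert (Rabs (C k n - g) * norm (ys n) < d2 / 2).
      { apply Rle_lt_trans with (Rabs (C k n - g) * (norm (ys n) + 1)).
        - apply Rmult_le_compat_l; [apply Rabs_pos|lra].
        - apply (Rmult_lt_compat_r (norm (ys n) + 1)) in hk1; [|lra].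
          replace (d2 / (2 * (norm (ys n) + 1)) * (norm (ys n) + 1)) with (d2 / 2) in hk1
            by (field; lra).
          exact hk1. }
      lra.
Qed.

Lemma riesz_lemma : infinite_dimensional X -> forall ys n,
  exists e, norm e = 1 /\ forall b, / 2 <= dist e (lin_comb ys b n).
Proof.
  intros HI ys n. destruct (exists_not_in_span ys n HI) as [x hx].
  destruct (dist_span_pos n ys x hx) as [d [hd1 hd2]].
  set (E := fun r => forall c, r <= dist x (lin_comb ys c n)).
  assert (HE : bound E).
  { exists (norm x). intros r hr. specialize (hr (fun _ => 0)).
    rewrite lin_comb0, opp_zero, add_zero_r in hr. auto. }
  destruct (completeness E HE (ex_intro _ d hd2)) as [D [HD1 HD2]].
  assert (hdD : d <= D) by (apply HD1; exact hd2).
  assert (hlow : forall c, D <= dist x (lin_comb ys c n))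
    by (intro c; apply HD2; intros r hr; apply hr).
  assert (exists c0, dist x (lin_comb ys c0 n) < 2 * D) as [c0 hc0].
  { apply NNPP; intro h. assert (h2D : E (2 * D)).
    { intro c. apply Rnot_lt_le; intro h'. apply h; eauto. }
    specialize (HD1 _ h2D). lra. }
  set (r0 := dist x (lin_comb ys c0 n)) in *.
  assert (hr0 : D <= r0) by apply hlow.
  assert (hinv : 0 < / r0) by (apply Rinv_0_lt_compat; lra).
  exists (scal (/ r0) (add x (opp (lin_comb ys c0 n)))). split.
  - rewrite norm_scal, Rabs_right by lra. fold r0. field; lra.
  - intro b.
    replace (add (scal (/ r0) (add x (opp (lin_comb ys c0 n)))) (opp (lin_comb ys b n)))
      with (scal (/ r0) (add x (opp (lin_comb ys (fun i => c0 i + r0 * b i) n)))).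
    + rewrite norm_scal, Rabs_right by lra.
      apply Rle_trans with (/ r0 * D); [|apply Rmult_le_compat_l; [lra|apply hlow]].
      apply (Rmult_le_reg_l r0); [lra|]. rewrite <- Rmult_assoc, Rinv_r by lra. lra.
    + rewrite lin_combD, lin_combZ, opp_add, add_assoc, !scal_add_r, !scal_opp, scal_assoc.
      f_equal. rewrite opp_eq_scal. f_equal. field. lra.
Qed.

End Riesz.

Section SeparatedSequence.
Context {X : RBanach}.

Fixpoint riesz_prefix (next : (nat -> X) -> nat -> X) (k : nat) : nat -> X :=
  match k with
  | O => fun _ => zero
  | S m => fun i => if Nat.eqb i m then next (riesz_prefix next m) m else riesz_prefix next m i
  end.

Lemma separated_unit_sequence U : ultrafilter U -> nonprincipal U -> infinite_dimensional X ->
  exists e : nat -> X, (forall k, norm (e k) = 1) /\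
    forall i j, i <> j -> / 2 <= dist (e i) (e j).
Proof.
  intros HU HN HI.
  destruct (choice (fun (p : (nat -> X) * nat) e =>
    norm e = 1 /\ forall b, / 2 <= dist e (lin_comb (fst p) b (snd p)))) as [next Hnext].
  { intros [ys n]. apply (riesz_lemma U HU HN HI). }
  set (pre := riesz_prefix (fun ys k => next (ys, k))).
  assert (Hpre : forall k i, (i < k)%nat -> pre k i = next (pre i, i)).
  { induction k as [|k IHk]; intros i hi; [lia|].
    change (pre (S k) i) with (if Nat.eqb i k then next (pre k, k) else pre k i).
    destruct (Nat.eqb_spec i k) as [->|].
    - reflexivity.
    - apply IHk; lia. }
  exists (fun i => next (pre i, i)). split; [intro k; apply Hnext|].
  assert (Hlt : forall i j, (i < j)%nat -> / 2 <= dist (next (pre j, j)) (next (pre i, i))).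
  { intros i j hij. destruct (Hnext (pre j, j)) as [_ h].
    specialize (h (fun m => if Nat.eqb m i then 1 else 0)). simpl in h.
    rewrite lin_comb_delta, scal_one, Hpre in h; auto. }
  intros i j hij. destruct (Nat.lt_total i j) as [h|[h|h]]; [|lia|auto].
  rewrite dist_sym. auto.
Qed.

End SeparatedSequence.

Section WeakLimits.
Context {X : RBanach}.
Variable U : (nat -> Prop) -> Prop.
Hypothesis HU : ultrafilter U.

Lemma weak_ulim_const (x : X) : weak_ulim U (fun _ => x) x.
Proof. intros f _ eps he. apply (filter_all U HU). intro. rewrite Rminus_diag, Rabs_R0; lra. Qed.

(* Reflexivity turns the functional  f |-> lim_U f (z n)  on X^* into a point of X. *)
Lemma weak_ulim_exists (z : nat -> X) : reflexive X -> bounded_seq z -> exists x0, weak_ulim U z x0.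
Proof.
  intros HR [Cz hz].
  destruct (choice (fun (f : X -> R) L =>
    (exists L', ulim U (fun n => f (z n)) L') -> ulim U (fun n => f (z n)) L)) as [Phi HPhi].
  { intro f. destruct (classic (exists L', ulim U (fun n => f (z n)) L')) as [[L hL]|h].
    - exists L; auto.
    - exists 0; tauto. }
  assert (Hex : forall f, bounded_linear_functional f -> exists L, ulim U (fun n => f (z n)) L).
  { intros f (_ & _ & [Cf hCf]). apply (ulim_exists U HU _ (Rabs Cf * Cz)). intro n.
    pose proof (norm_ge0 (z n)). pose proof (Rle_abs Cf). pose proof (Rabs_pos Cf).
    apply Rle_trans with (Cf * norm (z n)); [auto|]. specialize (hz n). nra. }
  destruct (HR Phi) as [x0 hx0].
  - intros f g hf hg. apply (ulim_unique U HU (fun n => f (z n) + g (z n))).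
    + apply (HPhi (fun x => f x + g x)). exists (Phi f + Phi g). apply ulimD; auto.
    + apply ulimD; auto.
  - intros a f hf. apply (ulim_unique U HU (fun n => a * f (z n))).
    + apply (HPhi (fun x => a * f x)). exists (a * Phi f). apply ulimZ; auto.
    + apply ulimZ; auto.
  - exists Cz. intros f M hf hM hfM. apply (ulim_abs_le U HU (fun n => f (z n))); auto.
    intro n. apply Rle_trans with (M * norm (z n)); auto.
    rewrite (Rmult_comm Cz). apply Rmult_le_compat_l; auto.
  - exists x0. intros f hf. rewrite <- hx0 by auto. apply HPhi; auto.
Qed.

End WeakLimits.

Fixpoint last_index (P : nat -> Prop) (m : nat) : nat :=
  match m with
  | O => O
  | S m' => if excluded_middle_informative (P (S m')) then S m' else last_index P m'
  end.

Lemma last_index_spec P m : last_index P m = O \/ P (last_index P m).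
Proof. induction m; simpl; auto. destruct (excluded_middle_informative (P (S m))); auto. Qed.

Lemma last_index_ge P m k : (k <= m)%nat -> P k -> (k <= last_index P m)%nat.
Proof.
  induction m; intros h1 h2; simpl; [lia|].
  destruct (excluded_middle_informative (P (S m))); [lia|].
  destruct (Nat.eq_dec k (S m)); [subst; contradiction|]. apply IHm; auto; lia.
Qed.

(* A pseudo-intersection [B] of the [A k] yields an index [f n] with [n ∈ A (f n)]
   tending to infinity along [U]: take the last [k <= n] with [n ∈ A k]. *)
Lemma pseudointersection_index U (A : nat -> nat -> Prop) :
  ultrafilter U -> nonprincipal U ->
  (exists B, U B /\ forall k, finite_set (fun n => B n /\ ~ A k n)) ->
  exists f : nat -> nat, (forall n, f n = O \/ A (f n) n) /\ forall k, U (fun n => (k <= f n)%nat).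
Proof.
  intros HU HN [B [HB HBA]]. exists (fun n => last_index (fun k => A k n) n). split.
  - intro n. apply last_index_spec.
  - intro k. destruct (HBA k) as [Nk hNk].
    apply (filter_mono U HU _ _ (filter_and U HU _ _ HB (filter_ge U HU (Nk + k) HN))).
    intros n [h1 h2]. apply last_index_ge; [lia|].
    apply NNPP; intro h. specialize (hNk n (conj h1 h)). lia.
Qed.

Lemma separated_not_near {X : RBanach} U (e : nat -> X) (f : nat -> nat) (w : X) :
  ultrafilter U -> (forall i j, i <> j -> / 2 <= dist (e i) (e j)) ->
  (forall k, U (fun n => (k <= f n)%nat)) -> ~ U (fun n => dist (e (f n)) w < / 4).
Proof.
  intros HU Hsep Hf Hnear.
  destruct (filter_ex U HU _ Hnear) as [n0 h0].
  destruct (filter_ex U HU _ (filter_and U HU _ _ Hnear (Hf (S (f n0))))) as [m [hm1 hm2]].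
  pose proof (dist_triangle (e (f n0)) w (e (f m))) as htri. rewrite (dist_sym w) in htri.
  pose proof (Hsep (f n0) (f m) ltac:(lia)). lra.
Qed.

Theorem lemma6p4 (U : (nat -> Prop) -> Prop) (X : RBanach) (T : nat -> X -> X) :
  selective U -> nonprincipal U ->
  infinite_dimensional X -> reflexive X ->
  bounded_operator_sequence T ->
  ~ ultraproduct_is_I_plus_0 U T.
Proof.
  intros [HU [Hpi _]] HN HI HR _ HT.
  destruct (separated_unit_sequence U HU HN HI) as [e [He1 Hsep]].
  assert (He_bdd : forall s : nat -> nat, bounded_seq (fun n => e (s n)))
    by (intro s; exists 1; intro n; rewrite He1; lra).
  set (A := fun k n => dist (T n (e k)) (e k) < / (INR k + 1)).
  assert (HA : forall k, U (A k)).
  { intro k. apply (ulim_lt U HU (fun n => dist (T n (e k)) (e k))); [|apply inv_INR_S_pos].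
    apply (HT (fun _ => e k)); [apply (He_bdd (fun _ => k)) | apply weak_ulim_const, HU]. }
  destruct (pseudointersection_index U A HU HN (Hpi A HA)) as [f [Hf Hf_ge]].
  destruct (weak_ulim_exists U HU (fun n => e (f n)) HR (He_bdd f)) as [w Hw].
  destruct (inv_INR_S_lt (/ 8) ltac:(lra)) as [K HK].
  apply (separated_not_near U e f w HU Hsep Hf_ge).
  pose proof (ulim_lt U HU _ (/ 8) (HT _ w (He_bdd f) Hw) ltac:(lra)) as HTw.
  apply (filter_mono U HU _ _ (filter_and U HU _ _ HTw (Hf_ge (S K)))).
  intros n [h1 h2]. destruct (Hf n) as [h|h]; [lia|]. specialize (HK (f n) ltac:(lia)).
  unfold A in h. rewrite dist_sym in h.
  pose proof (dist_triangle (e (f n)) (T n (e (f n))) w). lra.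
Qed.
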